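(* For any $T,n,m\in\mathbb{N}_+$ there exist a constant $C(n)$ depending only on $n$, reals $\alpha_1,\dots,\alpha_m$ and $\beta_1,\dots,\beta_m>1$ such that, with $\phi(t;B)=\sum_{k=1}^m\alpha_k(t/B)^{-\beta_k}$, $$\max_{1\le B\le T}\ \sum_{t=1}^\infty\big|\mathbb{I}\{t=B\}-\phi(t;B)\big|\le\frac{C(n)T^{1.01(n+1)}}{m^n},$$ where the maximum is over integers $B$.
   Context: $\mathbb{I}\{\cdot\}$ denotes the indicator function. *)

From Stdlib Require Import Reals Lra Lia.
From Coquelicot Require Import Coquelicot.
Open Scope R_scope.

Definition phi (m : nat) (alpha beta : nat -> R) (t B : nat) : R :=
  sum_n_m (fun k => alpha k * Rpower (INR t / INR B) (- beta k)) 1 m.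

Definition ind_eq (t B : nat) : R := if Nat.eqb t B then 1 else 0.

(* the summand |I{t=B} - phi(t;B)|, series indexed by t = j+1, j >= 0 *)
Definition err_term (m : nat) (alpha beta : nat -> R) (B : nat) (j : nat) : R :=
  Rabs (ind_eq (S j) B - phi m alpha beta (S j) B).

From Stdlib Require Import Reals Lra Lia.
From Coquelicot Require Import Coquelicot.
Open Scope R_scope.

(* Take the exponents [beta_k = 2 + g (k - 1)] with [g = 1 / (ln T + 1)].  Then
   [phi(t;B) = (B/t)^2 p(w)], where [p] is the polynomial with coefficients
   [alpha_1, ..., alpha_m] and [w = (B/t)^g]; here [w = 1] exactly when [t = B],
   and for [t <> B] the point [w] lies at distance between [d = g / (2 (T + 1))]
   and [2] from [1].  Choosing [p(w) = T_K(X(w)) / T_K(X(1))], with [T_K] the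
   Chebyshev polynomial and [X] the quadratic map sending that annulus onto
   [[-1, 1]], gives [p(1) = 1] and [|p(w)| <= 2 (1 + d)^(-K)] elsewhere, so the
   error is at most [4 B^2 (1 + d)^(-K)].  With [K] about [m / 4] this decays like
   [(m d)^(-3n)], which beats [T^(1.01 (n+1)) / m^n] as soon as [m^n] exceeds
   [C(n) T^(1.01 (n+1))]; for smaller [m] the choice [alpha = 0], whose error is
   [1], suffices. *)

Definition is_poly (N : nat) (f : R -> R) : Prop :=
  exists c : nat -> R, forall w, f w = sum_n (fun i => c i * w ^ i) N.

Lemma sum_n_pow_S (d : nat -> R) (M : nat) (w : R) :
  sum_n (fun i => d i * w ^ i) (S M) = d O + w * sum_n (fun i => d (S i) * w ^ i) M.
Proof.
  induction M as [|M IH].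
  - rewrite sum_Sn, !sum_O. cbn. ring.
  - rewrite sum_Sn, IH, sum_Sn. cbn. ring.
Qed.

Lemma is_poly_ext N f g : is_poly N f -> (forall w, f w = g w) -> is_poly N g.
Proof. intros [c Hc] E. exists c. intros w. rewrite <- E. apply Hc. Qed.

Lemma is_poly_const a : is_poly 0 (fun _ => a).
Proof. exists (fun _ => a). intros w. rewrite sum_O. cbn. ring. Qed.

Lemma is_poly_plus N f g : is_poly N f -> is_poly N g -> is_poly N (fun w => f w + g w).
Proof.
  intros [c Hc] [d Hd]. exists (fun i => c i + d i). intros w.
  rewrite Hc, Hd, (sum_n_ext (fun i => (c i + d i) * w ^ i)
    (fun i => plus (c i * w ^ i) (d i * w ^ i))) by (intros i; apply Rmult_plus_distr_r).
  now rewrite sum_n_plus.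
Qed.

Lemma is_poly_scal N a f : is_poly N f -> is_poly N (fun w => a * f w).
Proof.
  intros [c Hc]. exists (fun i => a * c i). intros w.
  rewrite Hc, (sum_n_ext (fun i => a * c i * w ^ i) (fun i => mult a (c i * w ^ i)))
    by (intros i; apply Rmult_assoc).
  symmetry. exact (sum_n_mult_l a _ N).
Qed.

Lemma is_poly_le N M f : (N <= M)%nat -> is_poly N f -> is_poly M f.
Proof.
  intros HNM [c Hc]. exists (fun i => if Nat.leb i N then c i else 0). intros w.
  rewrite Hc. induction HNM as [|M HNM IH].
  - apply sum_n_ext_loc. intros i Hi. now rewrite (proj2 (Nat.leb_le i N) Hi).
  - rewrite sum_Sn, <- IH, (proj2 (Nat.leb_gt (S M) N)) by lia. cbn. ring.
Qed.

Lemma is_poly_mulX N f : is_poly N f -> is_poly (S N) (fun w => w * f w).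
Proof.
  intros [c Hc]. exists (fun i => match i with O => 0 | S j => c j end). intros w.
  rewrite sum_n_pow_S, Hc. ring.
Qed.

Lemma is_poly_mul N M f g : is_poly N f -> is_poly M g -> is_poly (N + M) (fun w => f w * g w).
Proof.
  intros Pf. revert g. induction M as [|M IH]; intros g [d Hd].
  - rewrite Nat.add_0_r. apply is_poly_ext with (fun w => d O * f w).
    + now apply is_poly_scal.
    + intros w. rewrite Hd, sum_O. cbn. ring.
  - apply is_poly_ext with
      (fun w => d O * f w + w * (f w * sum_n (fun i => d (S i) * w ^ i) M)).
    + apply is_poly_plus.
      * apply (is_poly_le N); [lia|]. now apply is_poly_scal.
      * rewrite Nat.add_succ_r. apply is_poly_mulX, IH. now exists (fun i => d (S i)).
    + intros w. rewrite Hd, sum_n_pow_S. ring.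
Qed.

Lemma is_poly_quadratic a b c : is_poly 2 (fun w => a + b * w + c * w ^ 2).
Proof.
  exists (fun i => match i with O => a | 1%nat => b | _ => c end). intros w.
  rewrite !sum_n_pow_S, sum_O. cbn. ring.
Qed.

(* [cheb k x = (T_k(x), U_(k-1)(x))]: Chebyshev polynomials of the first and second kind. *)
Fixpoint cheb (k : nat) (x : R) : R * R :=
  match k with
  | O => (1, 0)
  | S k => let (t, u) := cheb k x in (x * t + (x ^ 2 - 1) * u, t + x * u)
  end.

Definition chebT k x := fst (cheb k x).
Definition chebU k x := snd (cheb k x).

Lemma chebT_S k x : chebT (S k) x = x * chebT k x + (x ^ 2 - 1) * chebU k x.
Proof. unfold chebT, chebU. cbn. now destruct (cheb k x). Qed.

Lemma chebU_S k x : chebU (S k) x = chebT k x + x * chebU k x.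
Proof. unfold chebT, chebU. cbn. now destruct (cheb k x). Qed.

Lemma cheb_pell k x : chebT k x ^ 2 - (x ^ 2 - 1) * chebU k x ^ 2 = 1.
Proof.
  induction k as [|k IH]; [cbn; ring|].
  rewrite chebT_S, chebU_S.
  transitivity ((chebT k x ^ 2 - (x ^ 2 - 1) * chebU k x ^ 2) * (x ^ 2 - (x ^ 2 - 1)));
    [ring | rewrite IH; ring].
Qed.

Lemma Rabs_chebT_le1 k x : -1 <= x <= 1 -> Rabs (chebT k x) <= 1.
Proof.
  intros Hx. pose proof (cheb_pell k x).
  assert (0 <= (1 - x ^ 2) * chebU k x ^ 2) by (apply Rmult_le_pos; nra).
  apply Rabs_le. nra.
Qed.

Lemma cheb_binet k x s : s ^ 2 = x ^ 2 - 1 ->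
  chebT k x + s * chebU k x = (x + s) ^ k /\ chebT k x - s * chebU k x = (x - s) ^ k.
Proof.
  intros Hs. induction k as [|k [IHp IHm]]; [cbn; split; ring|].
  rewrite chebT_S, chebU_S. cbn [pow]. rewrite <- IHp, <- IHm.
  split; [transitivity ((chebT k x + s * chebU k x) * (x + s) + chebU k x * (x ^ 2 - 1 - s ^ 2))
         |transitivity ((chebT k x - s * chebU k x) * (x - s) + chebU k x * (x ^ 2 - 1 - s ^ 2))];
    try ring; rewrite Hs; ring.
Qed.

Lemma chebT_ge_pow k x d : 0 <= d -> 1 + d ^ 2 / 2 <= x -> (1 + d) ^ k / 2 <= chebT k x.
Proof.
  intros Hd Hx. set (s := sqrt (x ^ 2 - 1)).
  assert (Hss : s ^ 2 = x ^ 2 - 1) by (unfold s; rewrite pow2_sqrt; nra).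
  assert (Hsd : d <= s).
  { unfold s. rewrite <- (sqrt_pow2 d Hd). apply sqrt_le_1_alt. nra. }
  destruct (cheb_binet k x s Hss) as [Hp Hm].
  assert (0 <= (x - s) ^ k) by (apply pow_le; pose proof (sqrt_pos (x ^ 2 - 1)); nra).
  assert ((1 + d) ^ k <= (x + s) ^ k) by (apply pow_incr; nra).
  lra.
Qed.

Lemma is_poly_chebT_comp X k : is_poly 2 X ->
  is_poly (2 * k) (fun w => chebT k (X w)) /\
  is_poly (2 * k + 2) (fun w => (X w ^ 2 - 1) * chebU k (X w)).
Proof.
  intros PX.
  assert (PX2 : is_poly 4 (fun w => X w ^ 2 - 1)).
  { apply is_poly_ext with (fun w => X w * X w + -1); [|intros; ring].
    apply is_poly_plus; [exact (is_poly_mul 2 2 _ _ PX PX)|].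
    apply (is_poly_le 0); [lia|apply is_poly_const]. }
  induction k as [|k [IHT IHU]].
  - split; [exact (is_poly_const 1)|].
    apply (is_poly_le 0); [lia|].
    apply is_poly_ext with (fun _ => 0); [apply is_poly_const|intros; cbn; ring].
  - split.
    + apply is_poly_ext with (fun w => X w * chebT k (X w) + (X w ^ 2 - 1) * chebU k (X w));
        [|intros; now rewrite chebT_S].
      apply is_poly_plus; [|replace (2 * S k)%nat with (2 * k + 2)%nat by lia; exact IHU].
      replace (2 * S k)%nat with (2 + 2 * k)%nat by lia. now apply is_poly_mul.
    + apply is_poly_ext with (fun w => (X w ^ 2 - 1) * chebT k (X w)
                                      + X w * ((X w ^ 2 - 1) * chebU k (X w)));
        [|intros; rewrite chebU_S; ring].
      apply is_poly_plus.
      * replace (2 * S k + 2)%nat with (4 + 2 * k)%nat by lia. now apply is_poly_mul.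
      * replace (2 * S k + 2)%nat with (2 + (2 * k + 2))%nat by lia. now apply is_poly_mul.
Qed.

Lemma ln_nonneg x : 1 <= x -> 0 <= ln x.
Proof. intros H. rewrite <- ln_1. apply ln_le; lra. Qed.

Lemma ln_le_sub1 y : 0 < y -> ln y <= y - 1.
Proof. intros Hy. pose proof (exp_ineq1_le (ln y)). rewrite exp_ln in H; lra. Qed.

Lemma ln_ge_1_sub_inv y : 0 < y -> 1 - / y <= ln y.
Proof.
  intros Hy. pose proof (ln_le_sub1 (/ y) (Rinv_0_lt_compat _ Hy)).
  rewrite ln_Rinv in H; lra.
Qed.

Lemma ln_add1_pow_le x N : 1 <= x -> (ln x + 1) ^ N <= (INR N + 1) ^ N * x.
Proof.
  intros Hx. destruct N as [|N]; [cbn; lra|].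
  pose proof (ln_nonneg x Hx). pose proof (lt_0_INR (S N) ltac:(lia)).
  set (u := ln x / INR (S N)).
  assert (Hu : ln x = INR (S N) * u) by (unfold u; field; lra).
  assert (0 <= u) by (unfold u; apply Rdiv_le_0_compat; lra).
  (* with [ln x = N u]: [ln x + 1 <= (N + 1) (1 + u) <= (N + 1) e^u] and [(e^u)^N = x] *)
  assert (Hlin : ln x + 1 <= (INR (S N) + 1) * exp u).
  { assert ((INR (S N) + 1) * (1 + u) <= (INR (S N) + 1) * exp u)
      by (apply Rmult_le_compat_l; [lra | apply exp_ineq1_le]).
    nra. }
  assert (Hpow : exp u ^ S N = x).
  { rewrite <- Rpower_pow by apply exp_pos. unfold Rpower.
    rewrite ln_exp, <- Hu. apply exp_ln. lra. }
  rewrite <- Hpow at 2. rewrite <- Rpow_mult_distr. apply pow_incr. lra.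
Qed.

Lemma ln_nat_ratio_gap (t B : nat) : (1 <= t)%nat -> (1 <= B)%nat -> t <> B ->
  / (INR B + 1) <= Rabs (ln (INR B / INR t)).
Proof.
  intros Ht HB HtB.
  assert (1 <= INR t) by (apply (le_INR 1); lia).
  assert (1 <= INR B) by (apply (le_INR 1); lia).
  assert (HBt : 0 < INR B / INR t) by (apply Rdiv_lt_0_compat; lra).
  assert (0 < / (INR B + 1)) by (apply Rinv_0_lt_compat; lra).
  destruct (Nat.lt_ge_cases t B) as [Hlt|Hge].
  - assert (INR t + 1 <= INR B) by (rewrite <- S_INR; apply le_INR; lia).
    pose proof (ln_ge_1_sub_inv _ HBt) as Hln.
    rewrite Rinv_div in Hln.
    assert (/ (INR B + 1) <= 1 - INR t / INR B).
    { apply (Rmult_le_reg_r (INR B * (INR B + 1))); [nra|].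
      field_simplify; nra. }
    rewrite Rabs_pos_eq; lra.
  - assert (INR B + 1 <= INR t) by (rewrite <- S_INR; apply le_INR; lia).
    pose proof (ln_le_sub1 _ HBt).
    assert (INR B / INR t - 1 <= - / (INR B + 1)).
    { apply (Rmult_le_reg_r (INR t * (INR B + 1))); [nra|].
      field_simplify; nra. }
    rewrite Rabs_left; lra.
Qed.

Lemma exp_sub1_gap a e : 0 < e <= 1 -> e <= Rabs a -> e / 2 <= Rabs (exp a - 1).
Proof.
  intros He Ha. destruct (Rle_lt_dec 0 a) as [Ha0|Ha0].
  - rewrite Rabs_pos_eq in Ha by lra. pose proof (exp_ineq1_le a).
    rewrite Rabs_pos_eq; lra.
  - rewrite Rabs_left in Ha by lra.
    pose proof (exp_ineq1_le (- a)). pose proof (exp_pos a).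
    assert (Hinv : exp a * (1 - a) <= exp a * exp (- a)) by (apply Rmult_le_compat_l; lra).
    rewrite <- exp_plus, Rplus_opp_r, exp_0 in Hinv.
    assert (exp a < 1) by (rewrite <- exp_0; apply exp_increasing; lra).
    assert ((- a - e) * (1 - e / 2) >= 0) by (apply Rle_ge, Rmult_le_pos; lra).
    assert (e * (1 - e) >= 0) by (apply Rle_ge, Rmult_le_pos; lra).
    assert ((1 - exp a - e / 2) * (1 - a) >= 0) by lra.
    rewrite Rabs_left by lra. nra.
Qed.

Lemma is_series_inv_consecutive : is_series (fun j => / (INR (S j) * INR (S (S j)))) 1.
Proof.
  assert (Hsum : forall N, sum_n (fun j => / (INR (S j) * INR (S (S j)))) N = 1 - / INR (S (S N))).
  { induction N as [|N IH].
    - rewrite sum_O. cbn. field.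
    - rewrite sum_Sn, IH.
      change (1 - / INR (S (S N)) + / (INR (S (S N)) * INR (S (S (S N))))
              = 1 - / INR (S (S (S N)))).
      rewrite !S_INR. pose proof (pos_INR N). field. lra. }
  change (is_lim_seq (sum_n (fun j => / (INR (S j) * INR (S (S j))))) 1).
  eapply is_lim_seq_ext; [intros N; symmetry; apply Hsum|].
  replace (Finite 1) with (Finite (1 - 0)) by (f_equal; ring).
  apply is_lim_seq_minus'; [apply is_lim_seq_const|].
  change (is_lim_seq (fun N => / INR (S (S N))) (Rbar_inv p_infty)).
  apply is_lim_seq_inv; [|discriminate].
  apply (is_lim_seq_ext (fun N => INR (N + 2))); [intros N; f_equal; lia|].
  apply (is_lim_seq_incr_n INR 2), is_lim_seq_INR.
Qed.

Lemma series_le_of_inv_sq_bound (a : nat -> R) (M : R) :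
  (forall j, 0 <= a j <= M / INR (S j) ^ 2) -> ex_series a /\ Series a <= 2 * M.
Proof.
  intros Ha. set (b := fun j => 2 * M * / (INR (S j) * INR (S (S j)))).
  assert (Hb : is_series b (2 * M)).
  { pose proof (is_series_scal (2 * M) _ _ is_series_inv_consecutive) as H.
    rewrite <- (Rmult_1_r (2 * M)). exact H. }
  assert (HM : 0 <= M) by (pose proof (Ha O); cbn in H; lra).
  assert (Hab : forall j, 0 <= a j <= b j).
  { intros j. split; [apply Ha|]. eapply Rle_trans; [apply Ha|].
    unfold b. rewrite (S_INR (S j)). assert (1 <= INR (S j)) by (apply (le_INR 1); lia).
    apply (Rmult_le_reg_r (INR (S j) ^ 2 * (INR (S j) + 1))); [nra|].
    field_simplify; [nra|split|]; lra. }
  split.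
  - apply (@ex_series_le R_AbsRing R_CompleteNormedModule) with b; [|now exists (2 * M)].
    intros j. change (Rabs (a j) <= b j). rewrite Rabs_pos_eq; apply Hab.
  - rewrite <- (is_series_unique _ _ Hb). apply Series_le; [exact Hab|now exists (2 * M)].
Qed.

Lemma is_series_ind_eq (B : nat) : (1 <= B)%nat -> is_series (fun j => ind_eq (S j) B) 1.
Proof.
  intros HB.
  assert (Hsum : forall N, (B <= S N)%nat -> sum_n (fun j => ind_eq (S j) B) N = 1).
  { induction N as [|N IH]; intros HN.
    - rewrite sum_O. unfold ind_eq. now rewrite (proj2 (Nat.eqb_eq 1 B)) by lia.
    - rewrite sum_Sn. unfold ind_eq at 2. destruct (Nat.eqb_spec (S (S N)) B) as [E|E].
      + rewrite (sum_n_ext_loc _ (fun _ => 0)), sum_n_const.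
        * change (INR (S N) * 0 + 1 = 1). ring.
        * intros j Hj. unfold ind_eq. rewrite (proj2 (Nat.eqb_neq (S j) B)) by lia. reflexivity.
      + rewrite IH by lia. change (1 + 0 = 1). ring. }
  change (is_lim_seq (sum_n (fun j => ind_eq (S j) B)) 1).
  apply is_lim_seq_ext_loc with (fun _ => 1); [|apply is_lim_seq_const].
  exists B. intros N HN. symmetry. apply Hsum. lia.
Qed.

Lemma is_series_err_term_zero (m B : nat) (beta : nat -> R) : (1 <= B)%nat ->
  is_series (err_term m (fun _ => 0) beta B) 1.
Proof.
  intros HB. eapply is_series_ext; [|exact (is_series_ind_eq B HB)].
  intros j. unfold err_term, phi.
  rewrite (sum_n_m_ext _ (fun _ => zero)) by (intros; apply Rmult_0_l).
  rewrite sum_n_m_const_zero. change zero with 0. rewrite Rminus_0_r.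
  unfold ind_eq. destruct (Nat.eqb (S j) B); [symmetry; apply Rabs_R1|symmetry; apply Rabs_R0].
Qed.

Lemma Rpower_ratio_affine (t B g : R) (k : nat) : 0 < t -> 0 < B ->
  Rpower (t / B) (- (2 + g * INR k)) = (B / t) ^ 2 * Rpower (B / t) g ^ k.
Proof.
  intros Ht HB. assert (HBt : 0 < B / t) by (apply Rdiv_lt_0_compat; lra).
  rewrite <- !Rpower_pow, Rpower_mult, <- Rpower_plus by (try apply exp_pos; lra).
  unfold Rpower. rewrite !ln_div by lra. f_equal. cbn. ring.
Qed.

Lemma phi_affine_exponents m (c : nat -> R) a g (t B : nat) :
  (1 <= m)%nat -> (1 <= t)%nat -> (1 <= B)%nat ->
  phi m (fun k => c (k - 1)%nat * a) (fun k => 2 + g * INR (k - 1)) t B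
  = (INR B / INR t) ^ 2 * a * sum_n (fun i => c i * Rpower (INR B / INR t) g ^ i) (m - 1).
Proof.
  intros Hm Ht HB. unfold phi, sum_n.
  replace m with (S (m - 1)) at 1 by lia. rewrite <- sum_n_m_S.
  rewrite (sum_n_m_ext _ (fun i => mult ((INR B / INR t) ^ 2 * a)
                                   (c i * Rpower (INR B / INR t) g ^ i))).
  - exact (sum_n_m_mult_l (K := R_Ring) _ _ _ _).
  - intros i. rewrite Nat.sub_succ, Nat.sub_0_r, Rpower_ratio_affine.
    + match goal with |- ?x = ?y => change (@eq R x y) end. cbn. ring.
    + apply (lt_INR 0); lia.
    + apply (lt_INR 0); lia.
Qed.

Definition kernel_step (T : nat) : R := / (ln (INR T) + 1).

Definition kernel_gap (T : nat) : R := kernel_step T / (2 * (INR T + 1)).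

(* The affine map in [(w - 1)^2] sending [[d^2, 4]] onto [[-1, 1]]. *)
Definition window (d w : R) : R := (4 + d ^ 2 - 2 * (w - 1) ^ 2) / (4 - d ^ 2).

Lemma is_poly_window d : d ^ 2 <> 4 -> is_poly 2 (window d).
Proof.
  intros Hd. eapply is_poly_ext; [apply (is_poly_quadratic ((2 + d ^ 2) / (4 - d ^ 2))
    (4 / (4 - d ^ 2)) (-2 / (4 - d ^ 2)))|].
  intros w. unfold window. field. lra.
Qed.

Lemma window_bounds d w : 0 < d < 2 -> d <= Rabs (w - 1) <= 2 -> -1 <= window d w <= 1.
Proof.
  intros Hd Hw. assert (d ^ 2 <= (w - 1) ^ 2 <= 4).
  { rewrite <- (pow2_abs (w - 1)). split; [apply pow_incr; lra|].
    replace 4 with (2 ^ 2) by ring. apply pow_incr. split; [apply Rabs_pos|lra]. }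
  unfold window. split.
  all: apply (Rmult_le_reg_r (4 - d ^ 2)); [nra|].
  all: unfold Rdiv; rewrite Rmult_assoc, Rinv_l by nra; nra.
Qed.

Lemma window_1_ge d : 0 <= d < 2 -> 1 + d ^ 2 / 2 <= window d 1.
Proof.
  intros Hd. unfold window. apply (Rmult_le_reg_r (4 - d ^ 2)); [nra|].
  unfold Rdiv. rewrite Rmult_assoc, Rinv_l by nra. nra.
Qed.

Section KernelScale.
Variable T : nat.
Hypothesis HT : (1 <= T)%nat.

Lemma kernel_step_bounds : 0 < kernel_step T <= 1 /\ kernel_step T * ln (INR T) <= 1.
Proof.
  assert (0 <= ln (INR T)) by (apply ln_nonneg, (le_INR 1); lia).
  unfold kernel_step. split; [split|].
  - apply Rinv_0_lt_compat. lra.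
  - rewrite <- Rinv_1. apply Rinv_le_contravar; lra.
  - apply (Rmult_le_reg_l (ln (INR T) + 1)); [lra|].
    rewrite <- Rmult_assoc, Rinv_r; lra.
Qed.

Lemma kernel_gap_bounds : 0 < kernel_gap T <= 1 / 4.
Proof.
  destruct kernel_step_bounds as [[Hg0 Hg1] _]. assert (1 <= INR T) by (apply (le_INR 1); lia).
  unfold kernel_gap. split.
  - apply Rdiv_lt_0_compat; lra.
  - apply (Rmult_le_reg_r (2 * (INR T + 1))); [lra|].
    unfold Rdiv. rewrite Rmult_assoc, Rinv_l; lra.
Qed.

Lemma kernel_gap_ge : / (4 * INR T * (ln (INR T) + 1)) <= kernel_gap T.
Proof.
  assert (1 <= INR T) by (apply (le_INR 1); lia).
  pose proof (ln_nonneg (INR T) H).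
  unfold kernel_gap, kernel_step, Rdiv. rewrite <- Rinv_mult.
  apply Rinv_le_contravar; [apply Rmult_lt_0_compat; lra|]. nra.
Qed.

Lemma kernel_separation (t B : nat) : (1 <= t)%nat -> (1 <= B <= T)%nat -> t <> B ->
  kernel_gap T <= Rabs (Rpower (INR B / INR t) (kernel_step T) - 1) <= 2.
Proof.
  intros Ht HB HtB. destruct kernel_step_bounds as [[Hg0 Hg1] HgT].
  assert (1 <= INR t) by (apply (le_INR 1); lia).
  assert (1 <= INR B <= INR T) by (split; [apply (le_INR 1)|apply le_INR]; lia).
  set (a := kernel_step T * ln (INR B / INR t)).
  assert (Ha : a <= 1).
  { unfold a. rewrite ln_div by lra.
    pose proof (ln_nonneg (INR t) ltac:(lra)).
    pose proof (ln_le (INR B) (INR T) ltac:(lra) ltac:(lra)).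
    assert (0 <= kernel_step T * (ln (INR T) - ln (INR B) + ln (INR t)))
      by (apply Rmult_le_pos; lra).
    lra. }
  pose proof (exp_pos a). pose proof (exp_le_3).
  assert (exp a <= exp 1)
    by (destruct Ha as [Ha|Ha]; [left; apply exp_increasing; lra|rewrite Ha; lra]).
  unfold Rpower. fold a. split; [|apply Rabs_le; lra].
  apply (Rle_trans _ (kernel_step T / (INR T + 1) / 2)); [right; unfold kernel_gap; field; lra|].
  apply exp_sub1_gap.
  - split; [apply Rdiv_lt_0_compat; lra|].
    apply (Rle_trans _ (kernel_step T)); [|lra].
    unfold Rdiv. rewrite <- (Rmult_1_r (kernel_step T)) at 2.
    apply Rmult_le_compat_l; [lra|]. rewrite <- Rinv_1. apply Rinv_le_contravar; lra.
  - unfold a. rewrite Rabs_mult, Rabs_pos_eq by lra. unfold Rdiv.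
    apply Rmult_le_compat_l; [lra|]. eapply Rle_trans; [|apply ln_nat_ratio_gap; lia].
    apply Rinv_le_contravar; lra.
Qed.

End KernelScale.

Section ChebyshevKernel.
Variables (T K m : nat) (c : nat -> R).
Hypotheses (HT : (1 <= T)%nat) (Hm : (1 <= m)%nat).
Hypothesis Hc :
  forall w, chebT K (window (kernel_gap T) w) = sum_n (fun i => c i * w ^ i) (m - 1).

Let D := chebT K (window (kernel_gap T) 1).

Lemma kernel_norm_ge : (1 + kernel_gap T) ^ K / 2 <= D.
Proof.
  pose proof (kernel_gap_bounds T HT).
  apply chebT_ge_pow; [lra|]. apply window_1_ge. lra.
Qed.

Lemma kernel_norm_pos : 0 < D.
Proof.
  pose proof (kernel_gap_bounds T HT). pose proof kernel_norm_ge.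
  assert (0 < (1 + kernel_gap T) ^ K) by (apply pow_lt; lra). lra.
Qed.

Let alpha k := c (k - 1)%nat * / D.
Let beta k := 2 + kernel_step T * INR (k - 1).

Lemma kernel_err_term_le (B j : nat) : (1 <= B <= T)%nat ->
  0 <= err_term m alpha beta B j <= INR B ^ 2 / D / INR (S j) ^ 2.
Proof.
  intros HB. pose proof kernel_norm_pos.
  assert (Ht : 0 < INR (S j)) by (apply (lt_INR 0); lia).
  split; [apply Rabs_pos|].
  unfold err_term, ind_eq, alpha, beta. rewrite phi_affine_exponents, <- Hc by lia.
  destruct (Nat.eqb_spec (S j) B) as [E|E].
  - assert (0 < INR B) by (rewrite <- E; exact Ht).
    rewrite E, Rdiv_diag by lra. unfold Rpower at 1. rewrite ln_1, Rmult_0_r, exp_0.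
    rewrite pow1, Rmult_1_l, Rinv_l by (apply Rgt_not_eq, kernel_norm_pos).
    rewrite Rminus_diag, Rabs_R0.
    apply Rmult_le_pos; [|left; apply Rinv_0_lt_compat, pow_lt; lra].
    apply Rdiv_le_0_compat; [apply pow_le, pos_INR|lra].
  - pose proof (kernel_separation T HT (S j) B ltac:(lia) HB E).
    pose proof (kernel_gap_bounds T HT).
    assert (Hw : Rabs (chebT K (window (kernel_gap T)
                                  (Rpower (INR B / INR (S j)) (kernel_step T)))) <= 1)
      by (apply Rabs_chebT_le1, window_bounds; lra).
    rewrite Rminus_0_l, Rabs_Ropp, !Rabs_mult, Rabs_pos_eq, (Rabs_pos_eq (/ D)).
    + replace (INR B ^ 2 / D / INR (S j) ^ 2) with ((INR B / INR (S j)) ^ 2 * / D * 1)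
        by (field; lra).
      apply Rmult_le_compat_l; [|exact Hw].
      apply Rmult_le_pos; [apply pow2_ge_0|left; apply Rinv_0_lt_compat; lra].
    + left; apply Rinv_0_lt_compat; lra.
    + apply pow2_ge_0.
Qed.

Lemma kernel_err_series (B : nat) : (1 <= B <= T)%nat ->
  ex_series (err_term m alpha beta B) /\
  Series (err_term m alpha beta B) <= 4 * INR B ^ 2 / (1 + kernel_gap T) ^ K.
Proof.
  intros HB.
  destruct (series_le_of_inv_sq_bound _ (INR B ^ 2 / D) (fun j => kernel_err_term_le B j HB))
    as [Hex Hle].
  split; [exact Hex|]. eapply Rle_trans; [exact Hle|].
  pose proof kernel_norm_ge. pose proof (kernel_gap_bounds T HT).
  assert (0 < (1 + kernel_gap T) ^ K) by (apply pow_lt; lra).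
  assert (0 <= INR B ^ 2) by apply pow2_ge_0.
  unfold Rdiv. replace (4 * INR B ^ 2 * / (1 + kernel_gap T) ^ K)
    with (2 * INR B ^ 2 * / ((1 + kernel_gap T) ^ K / 2)) by (field; lra).
  rewrite <- Rmult_assoc. apply Rmult_le_compat_l; [lra|].
  apply Rinv_le_contravar; lra.
Qed.

End ChebyshevKernel.

Lemma chebyshev_kernel_approx (T K m : nat) : (1 <= T)%nat -> (2 * K < m)%nat ->
  exists alpha beta : nat -> R,
    (forall k, 1 < beta k) /\
    (forall B, (1 <= B <= T)%nat ->
       ex_series (err_term m alpha beta B) /\
       Series (err_term m alpha beta B) <= 4 * INR T ^ 2 / (1 + kernel_gap T) ^ K).
Proof.
  intros HT HKm. pose proof (kernel_gap_bounds T HT).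
  assert (Hpoly : is_poly (m - 1) (fun w => chebT K (window (kernel_gap T) w))).
  { apply (is_poly_le (2 * K)); [lia|].
    apply is_poly_chebT_comp, is_poly_window. nra. }
  destruct Hpoly as [c Hc].
  exists (fun k => c (k - 1)%nat * / chebT K (window (kernel_gap T) 1)),
         (fun k => 2 + kernel_step T * INR (k - 1)).
  split.
  - intros k. pose proof (kernel_step_bounds T HT). pose proof (pos_INR (k - 1)).
    assert (0 <= kernel_step T * INR (k - 1)) by (apply Rmult_le_pos; lra). lra.
  - intros B HB. destruct (kernel_err_series T K m c HT ltac:(lia) Hc B HB) as [Hex Hle].
    split; [exact Hex|]. eapply Rle_trans; [exact Hle|].
    assert (INR B ^ 2 <= INR T ^ 2) by (apply pow_incr; split; [apply pos_INR|apply le_INR; lia]).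
    assert (0 < (1 + kernel_gap T) ^ K) by (apply pow_lt; lra).
    unfold Rdiv. apply Rmult_le_compat_r; [left; apply Rinv_0_lt_compat|]; lra.
Qed.

Lemma pow_1_add_ge_mul_pow (q N : nat) d : 0 < d -> (INR q * d) ^ N <= (1 + d) ^ (q * N).
Proof.
  intros Hd. rewrite pow_mult. apply pow_incr. split.
  - apply Rmult_le_pos; [apply pos_INR|lra].
  - pose proof (poly q d Hd). lra.
Qed.

Lemma div_block_bounds (m N : nat) : (1 <= N)%nat -> (8 * N <= m)%nat ->
  (2 * (m / (4 * N) * N) < m)%nat /\ (m <= 8 * N * (m / (4 * N)))%nat.
Proof.
  intros HN Hm. pose proof (Nat.div_mod m (4 * N) ltac:(lia)).
  pose proof (Nat.mod_upper_bound m (4 * N) ltac:(lia)).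
  set (q := (m / (4 * N))%nat) in *. set (r := (m mod (4 * N))%nat) in *.
  split; nia.
Qed.

Lemma pow_ratio_gain (n : nat) (Tr M : R) : 0 < Tr -> 0 < M -> Tr ^ (n + 1) <= M ^ n ->
  Tr ^ (3 * n + 3) * M ^ n <= Tr ^ (n + 1) * M ^ (3 * n).
Proof.
  intros HT HM Hle.
  assert (ET : Tr ^ (3 * n + 3) = Tr ^ (n + 1) * Tr ^ (n + 1) * Tr ^ (n + 1))
    by (rewrite <- !pow_add; f_equal; lia).
  assert (EM : M ^ (3 * n) = M ^ n * M ^ n * M ^ n) by (rewrite <- !pow_add; f_equal; lia).
  rewrite ET, EM.
  assert (0 < Tr ^ (n + 1)) by (apply pow_lt; lra).
  assert (0 < M ^ n) by (apply pow_lt; lra).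
  assert (Tr ^ (n + 1) * Tr ^ (n + 1) <= M ^ n * M ^ n) by (apply Rmult_le_compat; lra).
  assert (0 <= Tr ^ (n + 1) * M ^ n * (M ^ n * M ^ n - Tr ^ (n + 1) * Tr ^ (n + 1)))
    by (apply Rmult_le_pos; [apply Rmult_le_pos|]; lra).
  lra.
Qed.

(* [C(n) = 4 (32 N (N + 1))^N] with [N = 3 n]: for [q = m / (4 N)] and [d = kernel_gap T],
   [32 N] bounds [m / (q d T (ln T + 1))], [(ln T + 1)^N <= (N + 1)^N T], and [N = 3 n]
   is the least [N] for which [m^n >= T^(n+1)] implies [T^(N+3) / m^(N-n) <= T^(n+1)]. *)
Definition approx_const (n : nat) : R :=
  4 * (32 * INR (3 * n) * (INR (3 * n) + 1)) ^ (3 * n).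

Lemma approx_const_ge (n : nat) : (1 <= n)%nat -> (8 * INR (3 * n)) ^ n <= approx_const n.
Proof.
  intros Hn. assert (HN : 1 <= INR (3 * n)) by (apply (le_INR 1); lia).
  unfold approx_const. set (N := INR (3 * n)) in *.
  assert (0 <= (8 * N) ^ (3 * n)) by (apply pow_le; lra).
  assert ((8 * N) ^ n <= (8 * N) ^ (3 * n)) by (apply Rle_pow; [lra|lia]).
  assert ((8 * N) ^ (3 * n) <= (32 * N * (N + 1)) ^ (3 * n)) by (apply pow_incr; nra).
  lra.
Qed.

Lemma rate_le_approx_const (n : nat) (Tr M Q d : R) : (1 <= n)%nat -> 1 <= Tr -> 0 < M -> 0 < d ->
  Tr ^ (n + 1) <= M ^ n -> M <= 8 * INR (3 * n) * Q -> / (4 * Tr * (ln Tr + 1)) <= d ->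
  4 * Tr ^ 2 / (Q * d) ^ (3 * n) <= approx_const n * Tr ^ (n + 1) / M ^ n.
Proof.
  intros Hn HT HM Hd HTM HMQ HdT.
  pose proof (ln_nonneg Tr HT) as HL.
  assert (HNr : 1 <= INR (3 * n)) by (apply (le_INR 1); lia).
  unfold approx_const. set (N := (3 * n)%nat) in *. set (Nr := INR N) in *.
  assert (HQd : 0 < Q * d) by (apply Rmult_lt_0_compat; [nra|lra]).
  assert (H4d : 1 <= 4 * Tr * (ln Tr + 1) * d).
  { apply (Rmult_le_reg_l (/ (4 * Tr * (ln Tr + 1)))); [apply Rinv_0_lt_compat; nra|].
    rewrite <- Rmult_assoc, Rinv_l, Rmult_1_l, Rmult_1_r by nra. exact HdT. }
  assert (HMN : M ^ N <= (32 * Nr * (Nr + 1)) ^ N * Tr ^ (N + 1) * (Q * d) ^ N).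
  { apply (Rle_trans _ ((32 * Nr * Tr * (ln Tr + 1) * (Q * d)) ^ N)); [apply pow_incr; nra|].
    pose proof (ln_add1_pow_le Tr N HT) as HLN. fold Nr in HLN.
    set (X := Q * d) in *. rewrite !Rpow_mult_distr, pow_add, pow_1.
    assert (0 <= 32 ^ N * Nr ^ N * Tr ^ N * X ^ N)
      by (repeat apply Rmult_le_pos; apply pow_le; lra).
    nra. }
  pose proof (pow_ratio_gain n Tr M ltac:(lra) HM HTM) as Hgain. fold N in Hgain.
  assert (0 < Tr ^ (N + 1)) by (apply pow_lt; lra).
  assert (0 < M ^ n) by (apply pow_lt; lra).
  assert (0 < (Q * d) ^ N) by (apply pow_lt; lra).
  assert (Hpow : Tr ^ 2 * Tr ^ (N + 1) = Tr ^ (N + 3)) by (rewrite <- pow_add; f_equal; lia).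
  apply (Rmult_le_reg_r ((Q * d) ^ N * M ^ n * Tr ^ (N + 1))); [apply Rmult_lt_0_compat; nra|].
  replace (4 * Tr ^ 2 / (Q * d) ^ N * ((Q * d) ^ N * M ^ n * Tr ^ (N + 1)))
    with (4 * (Tr ^ (N + 3) * M ^ n)) by (rewrite <- Hpow; field; lra).
  replace (4 * (32 * Nr * (Nr + 1)) ^ N * Tr ^ (n + 1) / M ^ n
           * ((Q * d) ^ N * M ^ n * Tr ^ (N + 1)))
    with (4 * (Tr ^ (n + 1) * ((32 * Nr * (Nr + 1)) ^ N * Tr ^ (N + 1) * (Q * d) ^ N)))
    by (field; lra).
  apply Rmult_le_compat_l; [lra|]. eapply Rle_trans; [exact Hgain|].
  apply Rmult_le_compat_l; [left; apply pow_lt; lra|exact HMN].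
Qed.

Lemma Rpower_exponent_ge_pow (n : nat) (Tr : R) : 1 <= Tr ->
  Tr ^ (n + 1) <= Rpower Tr (101 / 100 * (INR n + 1)).
Proof.
  intros HT. rewrite <- Rpower_pow, plus_INR by lra. apply Rle_Rpower; [lra|].
  pose proof (pos_INR n). cbn [INR]. lra.
Qed.

Lemma INR_8 : INR 8 = 8.
Proof. cbn. ring. Qed.

Lemma large_m_kernel_rate (n T m : nat) : (1 <= n)%nat -> (1 <= T)%nat ->
  approx_const n * Rpower (INR T) (101 / 100 * (INR n + 1)) < INR m ^ n ->
  (2 * (m / (4 * (3 * n)) * (3 * n)) < m)%nat /\
  4 * INR T ^ 2 / (1 + kernel_gap T) ^ (m / (4 * (3 * n)) * (3 * n))
    <= approx_const n * Rpower (INR T) (101 / 100 * (INR n + 1)) / INR m ^ n.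
Proof.
  intros Hn HT Hlarge.
  set (P := Rpower (INR T) (101 / 100 * (INR n + 1))) in *.
  set (N := (3 * n)%nat). set (q := (m / (4 * N))%nat).
  assert (HTr : 1 <= INR T) by (apply (le_INR 1); lia).
  assert (HP : INR T ^ (n + 1) <= P) by now apply Rpower_exponent_ge_pow.
  assert (HP1 : 1 <= P) by (pose proof (pow_R1_Rle _ (n + 1) HTr); lra).
  assert (HC : (8 * INR N) ^ n <= approx_const n) by now apply approx_const_ge.
  assert (HC1 : 1 <= approx_const n).
  { assert (1 <= INR N) by (apply (le_INR 1); lia).
    pose proof (pow_R1_Rle (8 * INR N) n ltac:(lra)). lra. }
  assert (Hm8 : (8 * N <= m)%nat).
  { destruct (Nat.le_gt_cases (8 * N) m) as [H|H]; [exact H|exfalso].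
    assert (INR m <= 8 * INR N) by (rewrite <- INR_8, <- mult_INR; apply le_INR; lia).
    assert (INR m ^ n <= (8 * INR N) ^ n) by (apply pow_incr; split; [apply pos_INR|lra]).
    nra. }
  destruct (div_block_bounds m N ltac:(lia) Hm8) as [HK HmQ]. fold q in HK, HmQ.
  split; [exact HK|].
  pose proof (kernel_gap_bounds T HT).
  assert (HMpos : 0 < INR m) by (apply (lt_INR 0); lia).
  assert (0 < INR q) by (apply (lt_INR 0); nia).
  assert (HQd : 0 < (INR q * kernel_gap T) ^ N) by (apply pow_lt, Rmult_lt_0_compat; lra).
  apply (Rle_trans _ (4 * INR T ^ 2 / (INR q * kernel_gap T) ^ N)).
  - unfold Rdiv. apply Rmult_le_compat_l; [pose proof (pow2_ge_0 (INR T)); lra|].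
    apply Rinv_le_contravar; [exact HQd|]. apply pow_1_add_ge_mul_pow. lra.
  - apply (Rle_trans _ (approx_const n * INR T ^ (n + 1) / INR m ^ n)).
    + apply rate_le_approx_const; try lra.
      * exact Hn.
      * apply (Rle_trans _ P); [exact HP|]. nra.
      * rewrite <- INR_8, <- !mult_INR. now apply le_INR.
      * now apply kernel_gap_ge.
    + unfold Rdiv. apply Rmult_le_compat_r; [left; apply Rinv_0_lt_compat, pow_lt; lra|].
      apply Rmult_le_compat_l; lra.
Qed.

Theorem lemmaF5 :
  forall n : nat, (1 <= n)%nat ->
  exists C : R,
  forall T m : nat, (1 <= T)%nat -> (1 <= m)%nat ->
  exists alpha beta : nat -> R,
    (forall k : nat, (1 <= k <= m)%nat -> 1 < beta k) /\
    (forall B : nat, (1 <= B <= T)%nat ->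
       ex_series (err_term m alpha beta B) /\
       Series (err_term m alpha beta B)
         <= C * Rpower (INR T) (101 / 100 * (INR n + 1)) / (INR m ^ n)).
Proof.
  intros n Hn. exists (approx_const n). intros T m HT Hm.
  set (P := Rpower (INR T) (101 / 100 * (INR n + 1))).
  assert (0 < INR m ^ n) by (apply pow_lt, (lt_INR 0); lia).
  destruct (Rle_lt_dec (INR m ^ n) (approx_const n * P)) as [Hsmall|Hlarge].
  - exists (fun _ => 0), (fun _ => 2). split; [intros; lra|]. intros B HB.
    pose proof (is_series_err_term_zero m B (fun _ => 2) ltac:(lia)) as Hzero.
    split; [now exists 1|]. rewrite (is_series_unique _ _ Hzero).
    apply (Rmult_le_reg_r (INR m ^ n)); [lra|].
    replace (approx_const n * P / INR m ^ n * INR m ^ n) with (approx_const n * P) by (field; lra).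
    lra.
  - destruct (large_m_kernel_rate n T m Hn HT Hlarge) as [HK Hrate].
    destruct (chebyshev_kernel_approx T _ m HT HK) as (alpha & beta & Hbeta & Herr).
    exists alpha, beta. split; [intros; apply Hbeta|]. intros B HB.
    destruct (Herr B HB) as [Hex Hle]. split; [exact Hex|]. exact (Rle_trans _ _ _ Hle Hrate).
Qed.
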